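(* If MAPTree is stopped early (by the time budget) after at least one iteration of its main loop, its output is a minimum-cost solution graph among all solution graphs of $\mathcal G_{\mathcal X,\mathcal Y}$ contained in the explored node set $\mathcal G'$.
   Context: Let $x_1,\dots,x_N\in\{0,1\}^F$ be a binary dataset $\mathcal X$ with labels $\mathcal Y\in\{0,1\}^N$, $[N]=\{1,\dots,N\}$. For $\mathcal I\subseteq[N]$, $f\in[F]$, $k\in\{0,1\}$ let $\mathcal I|_{f=k}=\{i\in\mathcal I:(x_i)_f=k\}$, $c^k(\mathcal I)=|\{i\in\mathcal I:y_i=k\}|$, $\mathcal V(\mathcal I)=\{f:\mathcal I|_{f=0}\neq\emptyset\text{ and }\mathcal I|_{f=1}\neq\emptyset\}$. Fix $\rho^1,\rho^0>0$, $\alpha\in(0,1)$, $\beta\ge0$; $\ell_{\rm leaf}(c^1,c^0)=B(c^1+\rho^1,c^0+\rho^0)/B(\rho^1,\rho^0)$ ($B$ the Beta function), $p_{\rm split}(d)=\alpha(1+d)^{-\beta}$, $p_{\rm leaf}(d,\mathcal I)=1$ if $\mathcal V(\mathcal I)=\emptyset$ else $1-p_{\rm split}(d)$, $p_{\rm inner}(d,\mathcal I)=0$ if $\mathcal V(\mathcal I)=\emptyset$ else $p_{\rm split}(d)/|\mathcal V(\mathcal I)|$; $-\log0=+\infty$, and a minimum over an empty set is $+\infty$. Graph $\mathcal G=\mathcal G_{\mathcal X,\mathcal Y}$: for nonempty $\mathcal I\subseteq[N]$, $d\in\{0,\dots,F\}$, an OR node $o_{\mathcal I,d}$ with terminal child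 $t_{\mathcal I,d}$ (edge cost $-\log p_{\rm leaf}(d,\mathcal I)-\log\ell_{\rm leaf}(c^1(\mathcal I),c^0(\mathcal I))$); for $d<F$, $f\in\mathcal V(\mathcal I)$, an AND child $a_{\mathcal I,d,f}$ (edge cost $-\log p_{\rm inner}(d,\mathcal I)$) with cost-$0$ edges to $o_{\mathcal I|_{f=0},d+1}$, $o_{\mathcal I|_{f=1},d+1}$; root $r=o_{[N],0}$; only nodes reachable from $r$ kept. A solution graph is a node set $\mathcal S\ni r$, all of whose nodes are reachable from $r$ inside $\mathcal S$, with every AND node of $\mathcal S$ having both children in $\mathcal S$ and every OR node of $\mathcal S$ exactly one child in $\mathcal S$; its cost is the sum of costs of edges $u\to v$ with $u,v\in\mathcal S$. Heuristic: $h(o_{\mathcal I,d})=-\max\{\log\ell_{\rm leaf}(c^1(\mathcal I),c^0(\mathcal I)),\log p_{\rm split}(d)+\log\ell_{\rm leaf}(c^1(\mathcal I),0)+\log\ell_{\rm leaf}(0,c^0(\mathcal I))\}$. MAPTree maintains a node set $\mathcal G'$, a set $\mathcal E$ of expanded OR nodes, and values $LB[u],UB[u]\in\mathbb R\cup\{+\infty\}$ for OR nodes ($UB[u]=+\infty$ until set); for an AND node $a$ with children $o_0,o_1$, $LB[a]=LB[o_0]+LB[o_1]$ and $UB[a]=UB[o_0]+UB[o_1]$. Initialize $\mathcal G'=\{r\}$, $\mathcal E=\emptyset$, $LB[r]=h(r)$, $UB[r]=+\infty$. While $LB[r]<UB[r]$ and time remains: (1) $o:=r$; while $o\in\mathcal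 E$, choose an AND child $a^*$ of $o$ minimizing $\mathrm{cost}(o,a)+LB[a]$, with children $o_0$ (value-0 side) and $o_1$, and set $o:=o_0$ if $UB[o_0]-LB[o_0]>UB[o_1]-LB[o_1]$, else $o:=o_1$. (2) Add $o$ to $\mathcal E$ and its terminal child to $\mathcal G'$; for each AND child $a$ of $o$ with children $o_0,o_1$, add $a,o_0,o_1$ to $\mathcal G'$ and set $LB[o_0]:=h(o_0)$, $LB[o_1]:=h(o_1)$. (3) Starting from $Q=\{o\}$, repeatedly remove from $Q$ an OR node $u$ of maximal depth, compute $v=\min\{\min_a(\mathrm{cost}(u,a)+LB[a]),\mathrm{cost}(u,t_u)\}$ over the AND children $a$ and terminal child $t_u$ of $u$; if $v>LB[u]$, set $LB[u]:=v$ and add to $Q$ every OR node of $\mathcal G'$ that is the parent of an AND node of $\mathcal G'$ having $u$ as child. (4) The same with $UB$ in place of $LB$, updating when $v<UB[u]$. Output $\mathrm{getSolution}(r)$, where for an OR node $u$ with terminal child $t$: if $u$ has no AND child or $\mathrm{cost}(u,t)\le\min_a(\mathrm{cost}(u,a)+UB[a])$, return $\{u,t\}$; else, with $a^*$ attaining the minimum and children $u_0,u_1$, return $\{u,a^*\}\cup\mathrm{getSolution}(u_0)\cup\mathrm{getSolution}(u_1)$. *)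

From HB Require Import structures.
From mathcomp Require Import all_boot all_order all_algebra.
From mathcomp Require Import all_classical all_reals.
From mathcomp Require Import ereal topology normedtype sequences exp measure.
From mathcomp Require Import lebesgue_measure lebesgue_integral.

Set Implicit Arguments.
Unset Strict Implicit.
Unset Printing Implicit Defensive.

Import Order.TTheory GRing.Theory Num.Theory.

(*   OR node       o_{I,d}     ~  OrN (I, d)                                 *)
(*   terminal node t_{I,d}     ~  TermN (I, d)                               *)
(*   AND node      a_{I,d,f}   ~  AndN ((I, d), f)                           *)
(* with I : {set 'I_N} (a subset of [N], 0-indexed), d : 'I_F.+1 (a depth in  *)
(* {0,...,F}) and f : 'I_F (a feature, 0-indexed).                           *)

Definition onode (N F : nat) := ({set 'I_N} * 'I_F.+1)%type.
Definition anode (N F : nat) := ({set 'I_N} * 'I_F.+1 * 'I_F)%type.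

Inductive node (N F : nat) :=
| OrN of onode N F
| TermN of onode N F
| AndN of anode N F.

Definition node_code N F (u : node N F) : (onode N F + onode N F) + anode N F :=
  match u with OrN o => inl (inl o) | TermN o => inl (inr o) | AndN a => inr a end.
Definition node_decode N F (c : (onode N F + onode N F) + anode N F) : node N F :=
  match c with inl (inl o) => OrN o | inl (inr o) => TermN o | inr a => AndN a end.
Lemma node_codeK N F : cancel (@node_code N F) (@node_decode N F).
Proof. by case. Qed.

HB.instance Definition _ N F := Finite.copy (node N F) (can_type (@node_codeK N F)).

Local Open Scope ring_scope.

Definition BetaF {R : realType} (a b : R) : R :=
  \int[@lebesgue_measure R]_(t in `]0%R, 1%R[) (t `^ (a - 1) * (1 - t) `^ (b - 1)).

Section MAPTree.
Context {R : realType} (N F : nat) (X : 'I_N -> 'I_F -> bool) (Y : 'I_N -> bool)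
        (rho1 rho0 alpha beta : R).

Local Notation onode := (onode N F).
Local Notation anode := (anode N F).
Local Notation node := (node N F).

Definition restrict (I : {set 'I_N}) (f : 'I_F) (k : bool) : {set 'I_N} :=
  [set i in I | X i f == k].
Definition cnt1 (I : {set 'I_N}) : nat := #|[set i in I | Y i]|.
Definition cnt0 (I : {set 'I_N}) : nat := #|[set i in I | ~~ Y i]|.
Definition Vset (I : {set 'I_N}) : {set 'I_F} :=
  [set f | (restrict I f false != finset.set0) && (restrict I f true != finset.set0)].

Definition depth (o : onode) : nat := o.2.
Definition child (a : anode) (k : bool) : onode :=
  (restrict a.1.1 a.2 k, inord a.1.2.+1).

Definition edge : rel node := fun u v =>
  match u, v with
  | OrN o, TermN o' => o' == o
  | OrN o, AndN a => [&& a.1 == o, (o.2 < F)%N & a.2 \in Vset o.1]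
  | AndN a, OrN o => (o == child a false) || (o == child a true)
  | _, _ => false
  end.

Definition mroot : onode := ([set: 'I_N], ord0).

Definition inG (v : node) : bool := connect edge (OrN mroot) v.

Definition ell_leaf (c1 c0 : nat) : R :=
  BetaF (c1%:R + rho1) (c0%:R + rho0) / BetaF rho1 rho0.
Definition p_split (d : nat) : R := alpha * (1 + d%:R) `^ (- beta).
Definition p_leaf (o : onode) : R :=
  if Vset o.1 == finset.set0 then 1 else 1 - p_split o.2.
Definition p_inner (o : onode) : R :=
  if Vset o.1 == finset.set0 then 0 else p_split o.2 / #|Vset o.1|%:R.

Definition tcost (o : onode) : R :=
  - ln (p_leaf o) - ln (ell_leaf (cnt1 o.1) (cnt0 o.1)).
(* cost of the edge o_{I,d} -> a_{I,d,f}  (p_inner > 0 whenever this edge exists) *)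
Definition acost (a : anode) : R := - ln (p_inner a.1).

Definition ecost (u v : node) : R :=
  match u, v with
  | OrN o, TermN _ => tcost o
  | OrN _, AndN a => acost a
  | _, _ => 0
  end.

Definition heur (o : onode) : R :=
  - Num.max (ln (ell_leaf (cnt1 o.1) (cnt0 o.1)))
            (ln (p_split o.2) + ln (ell_leaf (cnt1 o.1) 0) + ln (ell_leaf 0 (cnt0 o.1))).

Definition is_solution (S : {set node}) : Prop :=
  [/\ OrN mroot \in S,
      (forall v, v \in S -> inG v),
      (forall v, v \in S ->
         connect [rel x y | [&& edge x y, x \in S & y \in S]] (OrN mroot) v),
      (forall a v, AndN a \in S -> edge (AndN a) v -> v \in S) &
      (forall o, OrN o \in S -> #|[set v in S | edge (OrN o) v]| = 1%N)].

Definition solcost (S : {set node}) : R :=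
  \sum_(u in S) \sum_(v in S | edge u v) ecost u v.

Local Open Scope ereal_scope.

Record state := State {
  Gp : {set node};
  Ex : {set onode};
  LB : onode -> \bar R;
  UB : onode -> \bar R }.

Definition valA (val : onode -> \bar R) (a : anode) : \bar R :=
  val (child a false) + val (child a true).

Definition kidA (G' : {set node}) (o : onode) (a : anode) : bool :=
  edge (OrN o) (AndN a) && (AndN a \in G').

Definition init_state : state :=
  State [set OrN mroot] finset.set0 (fun o => (heur o)%:E) (fun _ => +oo).

Definition guard (s : state) : bool := LB s mroot < UB s mroot.

Inductive descend (s : state) : onode -> onode -> Prop :=
| descend_stop (o : onode) : o \notin Ex s -> descend s o o
| descend_step (o : onode) (a : anode) (o' o'' : onode) :
    o \in Ex s -> kidA (Gp s) o a ->
    (forall a', kidA (Gp s) o a' ->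
       (acost a)%:E + valA (LB s) a <= (acost a')%:E + valA (LB s) a') ->
    o' = (if UB s (child a true) - LB s (child a true)
             < UB s (child a false) - LB s (child a false)
          then child a false else child a true) ->
    descend s o' o'' -> descend s o o''.

Definition expand (s : state) (o : onode) : state :=
  State (Gp s :|: [set TermN o]
              :|: [set v | [exists a, edge (OrN o) (AndN a) &&
                    [|| v == AndN a, v == OrN (child a false) | v == OrN (child a true)]]])
        (o |: Ex s)
        (fun u => if [exists a, edge (OrN o) (AndN a) &&
                        ((u == child a false) || (u == child a true))]
                  then (heur u)%:E else LB s u)
        (UB s).

Definition minval (G' : {set node}) (val : onode -> \bar R) (u : onode) : \bar R :=
  \big[Order.min/(tcost u)%:E]_(a | kidA G' u a) ((acost a)%:E + valA val a).

Definition parentsOf (G' : {set node}) (u : onode) : {set onode} :=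
  [set p | (OrN p \in G') &&
           [exists a, [&& AndN a \in G', edge (OrN p) (AndN a) & edge (AndN a) (OrN u)]]].

(* steps (3)/(4): propagation; [upd new old] says whether to update *)
Inductive propagate (G' : {set node}) (upd : \bar R -> \bar R -> bool) :
    {set onode} -> (onode -> \bar R) -> (onode -> \bar R) -> Prop :=
| propagate_done (val : onode -> \bar R) : propagate G' upd finset.set0 val val
| propagate_step (Q : {set onode}) (val val' : onode -> \bar R) (u : onode) :
    u \in Q -> (forall u', u' \in Q -> (depth u' <= depth u)%N) ->
    propagate G' upd
      (if upd (minval G' val u) (val u) then (Q :\ u) :|: parentsOf G' u else Q :\ u)
      (if upd (minval G' val u) (val u)
       then (fun x => if x == u then minval G' val u else val x) else val)
      val' ->
    propagate G' upd Q val val'.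

Definition upd_LB (v old : \bar R) : bool := old < v.
Definition upd_UB (v old : \bar R) : bool := v < old.

Definition iteration (s s' : state) : Prop :=
  exists o, descend s mroot o /\
    exists LB' UB',
      propagate (Gp (expand s o)) upd_LB [set o] (LB (expand s o)) LB' /\
      propagate (Gp (expand s o)) upd_UB [set o] (UB (expand s o)) UB' /\
      s' = State (Gp (expand s o)) (Ex (expand s o)) LB' UB'.

Definition minUB (s : state) (u : onode) : \bar R :=
  \big[Order.min/+oo]_(a | kidA (Gp s) u a) ((acost a)%:E + valA (UB s) a).

Inductive getSolution (s : state) : onode -> {set node} -> Prop :=
| getSolution_leaf (u : onode) :
    (tcost u)%:E <= minUB s u -> getSolution s u [set OrN u; TermN u]
| getSolution_inner (u : onode) (a : anode) (S0 S1 : {set node}) :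
    minUB s u < (tcost u)%:E -> kidA (Gp s) u a ->
    (acost a)%:E + valA (UB s) a = minUB s u ->
    getSolution s (child a false) S0 -> getSolution s (child a true) S1 ->
    getSolution s u ([set OrN u; AndN a] :|: S0 :|: S1).

End MAPTree.

(* Only the upper bounds matter.  After every iteration UB is +oo at the
   unexpanded OR nodes and satisfies, at every expanded OR node u, the Bellman
   equation of G'
     UB[u] = min (cost(u,t_u), min_a cost(u,a) + UB[a])
   over the AND children a of u present in G': an expansion only adds edges
   below a node whose bound is +oo, and step (4) lowers a value to the
   right-hand side and then re-queues the parents of the changed node.
   Following minimizing edges, getSolution therefore returns a solution graph
   inside G' of cost UB[r]; the root is expanded from the first iteration on.
   Conversely, in a solution graph S inside G' every OR node is expanded, OR
   nodes at equal depth carry disjoint sample sets, and so every node of S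
   other than r has exactly one parent in S.  Summing the local inequalities
   UB[v] <= cost(v,w) + UB[w] over S then telescopes to UB[r] <= cost(S). *)

From Pilot Require Import Defs.
From HB Require Import structures.
From mathcomp Require Import all_boot all_order all_algebra.
From mathcomp Require Import all_classical all_reals.
From mathcomp Require Import ereal topology normedtype sequences exp measure.
From mathcomp Require Import lebesgue_measure lebesgue_integral.
(* Imported again so that [subsetP] & co. are the finset lemmas, not the
   classical_sets ones. *)
From mathcomp Require Import fintype finset.
Import Order.TTheory GRing.Theory Num.Theory.
Local Open Scope ring_scope.

Section MAPTreeCorrectness.
Context {R : realType} {N F : nat} {X : 'I_N -> 'I_F -> bool} {Y : 'I_N -> bool}
        {rho1 rho0 alpha beta : R}.

Local Notation node := (Defs.node N F).
Local Notation onode := (Defs.onode N F).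
Local Notation anode := (Defs.anode N F).
Local Notation root := (mroot N F).
Local Notation state := (@Defs.state R N F).
Local Notation edge := (Defs.edge X).
Local Notation child := (Defs.child X).
Local Notation Vset := (Defs.Vset X).
Local Notation kidA := (Defs.kidA X).
Local Notation parentsOf := (Defs.parentsOf X).
Local Notation valA := (Defs.valA X).
Local Notation tcost := (Defs.tcost X Y rho1 rho0 alpha beta).
Local Notation acost := (Defs.acost X alpha beta).
Local Notation ecost := (Defs.ecost X Y rho1 rho0 alpha beta).
Local Notation minval := (Defs.minval X Y rho1 rho0 alpha beta).
Local Notation minUB := (Defs.minUB X alpha beta).
Local Notation solcost := (Defs.solcost X Y rho1 rho0 alpha beta).
Local Notation getSolution := (Defs.getSolution X Y rho1 rho0 alpha beta).
Local Notation propagate := (Defs.propagate X Y rho1 rho0 alpha beta).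
Local Notation descend := (Defs.descend X alpha beta).
Local Notation expand := (Defs.expand X Y rho1 rho0 alpha beta).
Local Notation iteration := (Defs.iteration X Y rho1 rho0 alpha beta).
Local Notation is_solution := (Defs.is_solution X).

Implicit Types (G S : {set node}) (E Q : {set onode}) (val : onode -> \bar R).
Implicit Types (o p u : onode) (a : anode) (v w : node) (s : state).

Lemma OrN_inj : injective (@OrN N F).
Proof. by move=> o o' []. Qed.

Definition node_set (v : node) : {set 'I_N} :=
  match v with OrN o | TermN o => o.1 | AndN a => a.1.1 end.

Lemma restrict_subset (I : {set 'I_N}) f k : Defs.restrict X I f k \subset I.
Proof. by apply/subsetP => i; rewrite inE => /andP[]. Qed.

Lemma child_subset a k : (child a k).1 \subset a.1.1.
Proof. exact: restrict_subset. Qed.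

Lemma child_disjoint a : [disjoint (child a false).1 & (child a true).1].
Proof.
rewrite -setI_eq0; apply/eqP/setP => i; rewrite !inE.
by case: (X i a.2); rewrite !andbF.
Qed.

Lemma child_neq0 {a} k : a.2 \in Vset a.1.1 -> (child a k).1 != set0.
Proof. by rewrite inE => /andP[]; case: k. Qed.

Lemma child_depth {a} k : (a.1.2 < F)%N -> (child a k).2 = a.1.2.+1 :> nat.
Proof. by move=> lt_aF; rewrite /= inordK. Qed.

Lemma edge_child a k : edge (AndN a) (OrN (child a k)).
Proof. by case: k; rewrite /= eqxx ?orbT. Qed.

Lemma edge_from_AndN {a w} : edge (AndN a) w -> exists k, w = OrN (child a k).
Proof. by case: w => //= o /orP[]/eqP->; [exists false | exists true]. Qed.

Lemma edge_from_OrN {o w} :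
  edge (OrN o) w -> w = TermN o \/ exists2 a, w = AndN a & edge (OrN o) (AndN a).
Proof. by case: w => // [o' /eqP->|a e]; [left | right; exists a]. Qed.

Lemma edge_into_OrN {v o} : edge v (OrN o) -> exists2 a, v = AndN a & exists k, o = child a k.
Proof.
by case: v => //= a /orP[]/eqP->; exists a => //; [exists false | exists true].
Qed.

Lemma edge_into_TermN {v o} : edge v (TermN o) -> v = OrN o.
Proof. by case: v => //= o' /eqP->. Qed.

Lemma edge_into_AndN {v a} : edge v (AndN a) -> v = OrN a.1.
Proof. by case: v => //= o /and3P[/eqP->]. Qed.

Lemma edge_OrN_AndN {o a} :
  edge (OrN o) (AndN a) -> [/\ a.1 = o, (o.2 < F)%N & a.2 \in Vset o.1].
Proof. by case/and3P => /eqP. Qed.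

Lemma node_set_edge_OrN {o w} : edge (OrN o) w -> node_set w = o.1.
Proof. by case: w => [o'|o'|a] //= => [/eqP->|/edge_OrN_AndN[<-]]. Qed.

Lemma disjoint_subset_neq {A B C : {set 'I_N}} :
  [disjoint A & C] -> C \subset B -> C != set0 -> A != B.
Proof.
move=> dAC sCB; apply: contraNneq => eAB.
by move: dAC; rewrite -setI_eq0 eAB (setIidPr sCB).
Qed.

Lemma children_neq {a} : a.2 \in Vset a.1.1 -> child a false != child a true.
Proof.
move=> aV; have := disjoint_subset_neq (child_disjoint a) (subxx _) (child_neq0 true aV).
by apply: contraNneq => ->.
Qed.

Lemma kid_child_neq {G} {u a} k : kidA G u a -> child a k != u.
Proof.
case/andP => /edge_OrN_AndN[<- lt_aF _] _.
apply/eqP => ck; have := child_depth k lt_aF.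
by rewrite ck => /eqP; rewrite (ltn_eqF (ltnSn _)).
Qed.

Local Open Scope ereal_scope.

Lemma bigmin_idx_min (I : finType) (P : pred I) (f : I -> \bar R) (x : \bar R) :
  \big[Order.min/x]_(i | P i) f i = Order.min x (\big[Order.min/+oo]_(i | P i) f i).
Proof.
elim/big_rec2: _ => [|i y1 y2 _ ->]; first by rewrite (minEle x +oo) leey.
by rewrite minCA.
Qed.

Lemma minval_minUB s u :
  minval (Gp s) (UB s) u = Order.min (tcost u)%:E (minUB s u).
Proof. exact: bigmin_idx_min. Qed.

Lemma minval_le_tcost G val u : minval G val u <= (tcost u)%:E.
Proof. exact: bigmin_le_id. Qed.

Lemma minval_le_kid G val u a : kidA G u a -> minval G val u <= (acost a)%:E + valA val a.
Proof. exact: bigmin_le_cond. Qed.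

Lemma le_minval {G} {val1 val2 : onode -> \bar R} {u} :
  (forall x, val1 x <= val2 x) -> minval G val1 u <= minval G val2 u.
Proof. by move=> le12; apply: le_bigmin2 => a _; rewrite !leeD. Qed.

Lemma eq_minval G (val1 val2 : onode -> \bar R) u :
  (forall a k, kidA G u a -> val1 (child a k) = val2 (child a k)) ->
  minval G val1 u = minval G val2 u.
Proof. by move=> e12; apply: eq_bigr => a ka; rewrite /valA !e12. Qed.

Lemma minval_neqNy G val u :
  (forall x, val x != -oo) -> minval G val u != -oo.
Proof.
move=> val_fin; rewrite -ltNye; apply/bigmin_gtP; split=> [|a _]; first exact: ltNyr.
by rewrite ltNye /valA !adde_eq_ninfty !negb_or !val_fin.
Qed.

Record expansion_invariant (G : {set node}) (E : {set onode}) : Prop := {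
  root_mem : OrN root \in G;
  and_mem : forall a, AndN a \in G -> [/\ a.1 \in E, edge (OrN a.1) (AndN a),
             OrN (child a false) \in G & OrN (child a true) \in G];
  term_mem : forall o, TermN o \in G -> o \in E;
  expanded_mem : forall o, o \in E -> TermN o \in G /\ OrN o \in G }.
Arguments root_mem {G E}.
Arguments and_mem {G E} _ {a}.
Arguments term_mem {G E} _ {o}.
Arguments expanded_mem {G E} _ {o}.

Lemma parentsOf_subset G E u : expansion_invariant G E -> parentsOf G u \subset E.
Proof.
move=> GE; apply/subsetP => p; rewrite inE => /andP[_ /existsP[a /and3P[aG ep _]]].
by have [<- _ _] := edge_OrN_AndN ep; have [] := and_mem GE aG.
Qed.

Lemma kid_child_notin_parentsOf {G E u p a} k : expansion_invariant G E ->
  p \notin parentsOf G u -> kidA G p a -> child a k != u.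
Proof.
move=> GE np /andP[ep aG]; apply: contraNneq np => <-.
have [ap _ _] := edge_OrN_AndN ep.
have [aE _ _ _] := and_mem GE aG.
have [_ pG] := expanded_mem GE aE; rewrite ap in pG.
by rewrite inE pG; apply/existsP; exists a; rewrite aG ep edge_child.
Qed.

(* [val] satisfies the Bellman equation of [G] at the nodes of [E] outside the
   queue [Q] of step (4), and is only too large on [Q]. *)
Definition bellman_except (G : {set node}) (E Q : {set onode}) (val : onode -> \bar R) :=
  [/\ forall x, val x != -oo,
      forall p, p \in E -> minval G val p <= val p &
      forall p, p \in E -> p \notin Q -> val p = minval G val p].

Lemma bellman_except_lower {G E Q val u} : expansion_invariant G E ->
  minval G val u < val u -> bellman_except G E Q val ->
  bellman_except G E ((Q :\ u) :|: parentsOf G u)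
    (fun x => if x == u then minval G val u else val x).
Proof.
move=> GE lt_u [val_fin le_val eq_val].
set val1 := fun x => _.
have val1_u : val1 u = minval G val u by rewrite /val1 eqxx.
have val1_neq x : x != u -> val1 x = val x by rewrite /val1 => /negbTE->.
have le_val1 x : val1 x <= val x.
  by case: (eqVneq x u) => [->|/val1_neq->]; rewrite ?val1_u ?(ltW lt_u).
have min_u : minval G val1 u = minval G val u.
  by apply: eq_minval => a k ka; rewrite val1_neq // (kid_child_neq k ka).
split.
- by move=> x; case: (eqVneq x u) => [->|/val1_neq->]; rewrite ?val1_u ?minval_neqNy.
- move=> p pE; case: (eqVneq p u) => [->|/val1_neq->]; first by rewrite val1_u min_u.
  exact: le_trans (le_minval le_val1) (le_val p pE).
- move=> p pE; rewrite in_setU in_setD1 negb_or negb_and negbK.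
  case: (eqVneq p u) => [->|pu /= /andP[pQ np]]; first by rewrite val1_u min_u.
  rewrite val1_neq // eq_val //; apply: eq_minval => a k ka.
  by rewrite val1_neq // (kid_child_notin_parentsOf k GE np ka).
Qed.

Lemma bellman_except_skip {G E Q val u} : u \in E ->
  ~~ (minval G val u < val u) -> bellman_except G E Q val ->
  bellman_except G E (Q :\ u) val.
Proof.
move=> uE ge_u [val_fin le_val eq_val]; split=> // p pE.
rewrite in_setD1 negb_and negbK => /orP[/eqP pu|]; last exact: eq_val.
by rewrite pu; apply/le_anti; rewrite le_val // andbT leNgt.
Qed.

Lemma propagate_bellman {G E Q val val'} : propagate G upd_UB Q val val' ->
  expansion_invariant G E -> Q \subset E -> bellman_except G E Q val ->
  bellman_except G E set0 val' /\ (forall x, x \notin E -> val' x = val x).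
Proof.
elim=> {Q val val'} [//|Q val val' u uQ _ _ IH] GE QE hval.
have uE := subsetP QE u uQ.
rewrite /upd_UB in IH; case: ifP IH => [lt_u|ge_u] IH.
  have QE' : (Q :\ u) :|: parentsOf G u \subset E.
    by rewrite subUset (subset_trans (subD1set _ _)) ?parentsOf_subset.
  have [hval' out] := IH GE QE' (bellman_except_lower GE lt_u hval).
  split=> // x xE; rewrite out //=.
  by case: (eqVneq x u) xE => // ->; rewrite uE.
have QE' : Q :\ u \subset E by rewrite (subset_trans (subD1set _ _)).
exact: IH GE QE' (bellman_except_skip uE (negbT ge_u) hval).
Qed.

Record invariant (s : state) : Prop := {
  inv_graph : expansion_invariant (Gp s) (Ex s);
  inv_bellman : bellman_except (Gp s) (Ex s) set0 (UB s);
  inv_unexpanded : forall o, o \notin Ex s -> UB s o = +oo;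
  inv_root : Ex s = set0 \/ root \in Ex s }.
Arguments inv_graph {s}.
Arguments inv_bellman {s}.
Arguments inv_unexpanded {s} _ {o}.
Arguments inv_root {s}.

Lemma invariant_init : invariant (@init_state R N F Y rho1 rho0 alpha beta).
Proof.
split=> //=; last by left.
- by split=> [|a|o|o]; rewrite !inE.
- by split=> // p; rewrite inE.
Qed.

Section Invariant.
Context {s : state} (hs : invariant s).

Lemma UB_neqNy o : UB s o != -oo.
Proof. by case: (inv_bellman hs). Qed.

Lemma UB_bellman {o} : o \in Ex s -> UB s o = minval (Gp s) (UB s) o.
Proof. by case: (inv_bellman hs) => _ _ eq_val /eq_val; apply; rewrite inE. Qed.

Lemma fine_UB_expanded {o} : o \in Ex s -> (fine (UB s o))%:E = UB s o.
Proof.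
move=> oE; rewrite fineK // fin_numElt ltNye UB_neqNy /=.
by rewrite UB_bellman //; apply: le_lt_trans (minval_le_tcost _ _ _) (ltry _).
Qed.

Lemma descend_unexpanded {o o'} : descend s o o' -> OrN o \in Gp s ->
  o' \notin Ex s /\ OrN o' \in Gp s.
Proof.
elim=> {o o'} [//|o a o1 o2 _ /andP[_ aG] _ -> _ IH] _; apply: IH.
by have [_ _ c0 c1] := and_mem (inv_graph hs) aG; case: ifP.
Qed.

Lemma descend_from_unexpanded {o o'} : o \notin Ex s -> descend s o o' -> o' = o.
Proof. by move=> oE hd; case: hd oE => // o1 a o2 o3 ->. Qed.

Lemma mem_Gp_expand o v : (v \in Gp (expand s o)) = [|| v \in Gp s, v == TermN o |
  [exists a, edge (OrN o) (AndN a) &&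
     [|| v == AndN a, v == OrN (child a false) | v == OrN (child a true)]]].
Proof. by rewrite !inE orbA. Qed.

Lemma Ex_expand o : Ex (expand s o) = o |: Ex s.
Proof. by []. Qed.

Lemma AndN_Gp_expand {o a} : AndN a \in Gp (expand s o) ->
  AndN a \in Gp s \/ edge (OrN o) (AndN a).
Proof.
rewrite mem_Gp_expand => /or3P[|//|/existsP[a' /andP[ea /or3P[/eqP[->]|//|//]]]].
  by left.
by right.
Qed.

Lemma expansion_invariant_expand {o} : OrN o \in Gp s ->
  expansion_invariant (Gp (expand s o)) (Ex (expand s o)).
Proof.
have [rG andG termG exG] := inv_graph hs.
move=> oG; have subG v : v \in Gp s -> v \in Gp (expand s o).
  by rewrite mem_Gp_expand => ->.
have new_or a k : edge (OrN o) (AndN a) -> OrN (child a k) \in Gp (expand s o).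
  move=> ea; rewrite mem_Gp_expand; apply/or3P/Or33/existsP; exists a.
  by case: k; rewrite ea !eqxx ?orbT.
split; rewrite ?Ex_expand.
- exact: subG.
- move=> a /AndN_Gp_expand[/andG[aE ea c0 c1]|ea].
    by rewrite in_setU1 aE orbT !subG.
  have [ao _ _] := edge_OrN_AndN ea.
  by rewrite ao in_setU1 eqxx ea !new_or.
- move=> o'; rewrite mem_Gp_expand in_setU1.
  by case/or3P=> [/termG->|/eqP[->]|/existsP[a /andP[_]]]; rewrite ?eqxx ?orbT.
- move=> o'; rewrite in_setU1 => /orP[/eqP->|/exG[tG o'G]]; last by rewrite !subG.
  by rewrite !mem_Gp_expand eqxx oG !orbT.
Qed.

Lemma kidA_expand o p a : o \notin Ex s -> p \in Ex s ->
  kidA (Gp (expand s o)) p a = kidA (Gp s) p a.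
Proof.
move=> oE pE; rewrite /kidA; case ep: (edge _ _) => //=.
apply/idP/idP => [|aG]; last by rewrite mem_Gp_expand aG.
case/AndN_Gp_expand => // /edge_OrN_AndN[ao _ _].
by have [ap _ _] := edge_OrN_AndN ep; rewrite -ao ap pE in oE.
Qed.

Lemma bellman_expand {o} : o \notin Ex s ->
  bellman_except (Gp (expand s o)) (Ex (expand s o)) [set o] (UB s).
Proof.
move=> oE; have minval_expand p : p \in Ex s ->
    minval (Gp (expand s o)) (UB s) p = minval (Gp s) (UB s) p.
  by move=> pE; apply: eq_bigl => a; rewrite kidA_expand.
split=> [x|p|p]; rewrite ?UB_neqNy // Ex_expand in_setU1.
- case/orP=> [/eqP->|pE]; first by rewrite (inv_unexpanded hs oE) leey.
  by rewrite minval_expand -?UB_bellman.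
- rewrite inE => /orP[/eqP->|pE]; first by rewrite eqxx.
  by rewrite minval_expand -?UB_bellman.
Qed.

Lemma invariant_iteration {s'} : iteration s s' -> invariant s' /\ root \in Ex s'.
Proof.
case=> o [hd [LB' [UB' [_ [hUB ->]]]]].
have [oE oG] := descend_unexpanded hd (root_mem (inv_graph hs)).
have GE := expansion_invariant_expand oG.
have oQ : [set o] \subset Ex (expand s o) by rewrite sub1set in_setU1 eqxx.
have [hUB' out] := propagate_bellman hUB GE oQ (bellman_expand oE).
have rE : root \in o |: Ex s.
  rewrite in_setU1; case: (inv_root hs) => [E0|->]; last by rewrite orbT.
  by rewrite (descend_from_unexpanded _ hd) ?eqxx // E0 inE.
split=> //; split=> //= [x|]; last by right.
rewrite in_setU1 negb_or => /andP[xo xE].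
by rewrite out ?in_setU1 ?negb_or ?xo // (inv_unexpanded hs).
Qed.

End Invariant.

Local Open Scope ring_scope.

Lemma sum_setU_disjoint S S' (f : node -> R) : [disjoint S & S'] ->
  \sum_(v in S :|: S') f v = \sum_(v in S) f v + \sum_(v in S') f v.
Proof. by move=> dS; rewrite -bigU //; apply: eq_bigl => v; rewrite !inE. Qed.

Lemma sum_setU_disjoint_cond S S' (P : pred node) (f : node -> R) : [disjoint S & S'] ->
  \sum_(v in S :|: S' | P v) f v = \sum_(v in S | P v) f v + \sum_(v in S' | P v) f v.
Proof. by move=> dS; rewrite !big_mkcondr sum_setU_disjoint. Qed.

Lemma sum_filter_set1 {S} {P : pred node} (f : node -> R) {c} :
  [set v in S | P v] = [set c] -> \sum_(v in S | P v) f v = f c.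
Proof.
move=> Sc; transitivity (\sum_(v in [set c]) f v); last by rewrite big_set1.
by rewrite -Sc; apply: eq_bigl => v; rewrite inE.
Qed.

Definition edge_in S : rel node := [rel x y | [&& edge x y, x \in S & y \in S]].

Lemma connect_edge_in_subset {S S' x y} : S \subset S' ->
  connect (edge_in S) x y -> connect (edge_in S') x y.
Proof.
move=> sub; apply: connect_sub => v w /and3P[e vS wS].
by apply/connect1/and3P; split; rewrite ?(subsetP sub).
Qed.

Lemma connect_edge_in_cons {S S' x y z} : S \subset S' -> edge_in S' x y ->
  connect (edge_in S) y z -> connect (edge_in S') x z.
Proof.
move=> sub exy yz; exact: connect_trans (connect1 exy) (connect_edge_in_subset sub yz).
Qed.

Definition rooted_solution u S : Prop :=
  [/\ OrN u \in S,
      forall v, v \in S -> connect (edge_in S) (OrN u) v,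
      forall a v, AndN a \in S -> edge (AndN a) v -> v \in S &
      forall o, OrN o \in S -> #|[set v in S | edge (OrN o) v]| = 1%N].

Lemma rooted_solution_is_solution S : rooted_solution root S -> is_solution S.
Proof.
case=> rS conn and_cl or_one; split=> // v vS.
by apply: connect_sub (conn v vS) => x y /andP[e _]; apply: connect1.
Qed.

Lemma OrN_children_pair {u w} : edge (OrN u) w ->
  [set v in [set OrN u; w] | edge (OrN u) v] = [set w].
Proof.
move=> e; apply/setP => v; rewrite !inE.
case: (eqVneq v w) => [->|_]; first by rewrite e orbT.
by rewrite orbF; case: (eqVneq v (OrN u)) => [->|].
Qed.

Lemma rooted_solution_leaf u : rooted_solution u [set OrN u; TermN u].
Proof.
have eT : edge (OrN u) (TermN u) by rewrite /= eqxx.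
split; first by rewrite !inE eqxx.
- move=> v; rewrite !inE => /orP[]/eqP->; first exact: connect0.
  by apply/connect1/and3P; split; rewrite ?eT // !inE eqxx ?orbT.
- by move=> a v; rewrite !inE => /orP[]/eqP.
- by move=> o; rewrite !inE => /orP[]/eqP // [->]; rewrite OrN_children_pair ?cards1.
Qed.

(* Distinct sample sets make separate pieces of a solution graph invisible to
   each other: [OrN] edges keep the sample set and [AndN] edges cost nothing. *)
Definition apart S S' := forall x y, x \in S -> y \in S' -> node_set x != node_set y.

Lemma apart_sym {S S'} : apart S S' -> apart S' S.
Proof. by move=> hS x y xS yS; rewrite eq_sym hS. Qed.

Lemma apart_setUr {S S1 S2} : apart S S1 -> apart S S2 -> apart S (S1 :|: S2).
Proof. by move=> h1 h2 x y xS; rewrite inE => /orP[]; [exact: h1 | exact: h2]. Qed.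

Lemma apart_disjoint {S S'} : apart S S' -> [disjoint S & S'].
Proof.
move=> hS; rewrite -setI_eq0; apply/eqP/setP => x; rewrite !inE.
by apply/negP => /andP[xS xS']; have := hS x x xS xS'; rewrite eqxx.
Qed.

Lemma apart_OrN_children {S S'} o : apart S S' -> OrN o \in S ->
  [set v in S :|: S' | edge (OrN o) v] = [set v in S | edge (OrN o) v].
Proof.
move=> hS oS; apply/setP => v; rewrite !inE.
case ev: (edge _ v); rewrite ?andbF ?andbT //.
case vS': (v \in S'); rewrite ?orbF //.
by have := hS _ _ oS vS'; rewrite (node_set_edge_OrN ev) eqxx.
Qed.

Lemma ecost_apart {v w} : edge v w -> node_set v != node_set w -> ecost v w = 0.
Proof.
by case: v => [o|o|a] e; [rewrite (node_set_edge_OrN e) eqxx | case: w e | case: w e].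
Qed.

Lemma solcost_apart {S S'} : apart S S' -> solcost (S :|: S') = solcost S + solcost S'.
Proof.
move=> hS; rewrite /solcost sum_setU_disjoint ?apart_disjoint //.
congr (_ + _); apply: eq_bigr => u uS; rewrite sum_setU_disjoint_cond ?apart_disjoint //.
  rewrite [X in _ + X]big1 ?addr0 // => v /andP[vS' e].
  exact: ecost_apart e (hS u v uS vS').
rewrite [X in X + _]big1 ?add0r // => v /andP[vS e].
by apply: ecost_apart e _; rewrite eq_sym hS.
Qed.

Lemma solcost_pair {u w} : edge (OrN u) w -> solcost [set OrN u; w] = ecost (OrN u) w.
Proof.
move=> e; have wu : w != OrN u by case: w e.
rewrite /solcost big_setU1 ?inE 1?eq_sym //= big_set1.
rewrite (sum_filter_set1 _ (OrN_children_pair e)) big1 ?addr0 // => v _.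
by case: w e {wu} => [o|o|a] //= _; case: v.
Qed.

Definition supported (A : {set 'I_N}) S :=
  forall v, v \in S -> node_set v \subset A /\ node_set v != set0.

Lemma apart_children {u a S0 S1} : edge (OrN u) (AndN a) ->
  supported (child a false).1 S0 -> supported (child a true).1 S1 ->
  [/\ apart [set OrN u; AndN a] S0, apart [set OrN u; AndN a] S1 & apart S0 S1].
Proof.
move=> ea sup0 sup1; have [au _ aV] := edge_OrN_AndN ea; rewrite -au in aV.
have top v : v \in [set OrN u; AndN a] -> node_set v = a.1.1.
  by rewrite !inE => /orP[]/eqP->; rewrite /= ?au.
have d01 := child_disjoint a.
split=> [x y /top-> /sup0[y0 _]|x y /top-> /sup1[y1 _]|x y /sup0[x0 _] /sup1[y1 ny]].
- rewrite eq_sym; apply: disjoint_subset_neq (disjointWl y0 d01) _ (child_neq0 true aV).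
  exact: child_subset.
- rewrite eq_sym disjoint_sym in d01 *.
  apply: disjoint_subset_neq (disjointWl y1 d01) _ (child_neq0 false aV).
  exact: child_subset.
- exact: disjoint_subset_neq (disjointWl x0 (disjointWr y1 d01)) (subxx _) ny.
Qed.

Lemma rooted_solution_node {u a S0 S1} : edge (OrN u) (AndN a) ->
  rooted_solution (child a false) S0 -> rooted_solution (child a true) S1 ->
  apart [set OrN u; AndN a] S0 -> apart [set OrN u; AndN a] S1 -> apart S0 S1 ->
  rooted_solution u ([set OrN u; AndN a] :|: S0 :|: S1).
Proof.
move=> ea [c0S conn0 and0 or0] [c1S conn1 and1 or1] aP0 aP1 a01.
set P := [set OrN u; AndN a]; set T := P :|: S0 :|: S1.
have uP : OrN u \in P by rewrite !inE eqxx.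
have aP : AndN a \in P by rewrite !inE eqxx orbT.
have PT : P \subset T by rewrite /T -setUA; apply: subsetUl.
have S0T : S0 \subset T by rewrite /T setUAC; apply: subsetUr.
have S1T : S1 \subset T by apply: subsetUr.
have memT x : (x \in T) = [|| x == OrN u, x == AndN a, x \in S0 | x \in S1].
  by rewrite !inE -!orbA.
have ua : edge_in T (OrN u) (AndN a) by apply/and3P; split; rewrite // (subsetP PT).
have ac k : OrN (child a k) \in T -> edge_in T (AndN a) (OrN (child a k)).
  by move=> cT; apply/and3P; split; rewrite ?edge_child // (subsetP PT).
split; first exact: (subsetP PT).
- move=> v; rewrite memT => /or4P[/eqP->|/eqP->|vS|vS].
  + exact: connect0.
  + exact: connect1 ua.
  + apply: connect_edge_in_cons (subxx _) ua (connect_edge_in_cons S0T _ (conn0 v vS)).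
    by rewrite ac ?(subsetP S0T).
  + apply: connect_edge_in_cons (subxx _) ua (connect_edge_in_cons S1T _ (conn1 v vS)).
    by rewrite ac ?(subsetP S1T).
- move=> a' v; rewrite memT => /or4P[/eqP//|/eqP[->]|a'S|a'S] e.
  + case: v e => [o||] //= /orP[]/eqP->; [exact: (subsetP S0T) | exact: (subsetP S1T)].
  + exact: (subsetP S0T) (and0 a' v a'S e).
  + exact: (subsetP S1T) (and1 a' v a'S e).
- move=> o; rewrite memT => /or4P[/eqP[->]|/eqP//|oS|oS].
  + rewrite /T -setUA (apart_OrN_children _ (apart_setUr aP0 aP1) uP).
    by rewrite OrN_children_pair ?cards1.
  + rewrite /T (setUC P S0) -setUA.
    by rewrite (apart_OrN_children _ (apart_setUr (apart_sym aP0) a01) oS) or0.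
  + rewrite /T setUC.
    by rewrite (apart_OrN_children _ (apart_setUr (apart_sym aP1) (apart_sym a01)) oS) or1.
Qed.

Lemma getSolution_supported {s u S} : getSolution s u S -> u.1 != set0 -> supported u.1 S.
Proof.
elim=> {u S} [u _|u a S0 S1 _ /andP[ea _] _ _ IH0 _ IH1] u0 v.
  by rewrite !inE => /orP[]/eqP->; rewrite /= subxx.
have [au _ aV] := edge_OrN_AndN ea; rewrite -au in aV.
have sub_child k w : node_set w \subset (child a k).1 -> node_set w \subset u.1.
  by move=> sub; rewrite -au (subset_trans sub (child_subset a k)).
rewrite !inE -!orbA => /or4P[/eqP->|/eqP->|vS|vS]; rewrite /= ?au ?subxx //.
- by have [sub ne] := IH0 (child_neq0 false aV) v vS; rewrite (sub_child false).
- by have [sub ne] := IH1 (child_neq0 true aV) v vS; rewrite (sub_child true).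
Qed.

Lemma getSolution_children_apart {s u a S0 S1} : edge (OrN u) (AndN a) ->
  getSolution s (child a false) S0 -> getSolution s (child a true) S1 ->
  [/\ apart [set OrN u; AndN a] S0, apart [set OrN u; AndN a] S1 & apart S0 S1].
Proof.
move=> ea g0 g1; have [au _ aV] := edge_OrN_AndN ea; rewrite -au in aV.
apply: (apart_children ea).
  by apply: (getSolution_supported g0); apply: child_neq0.
by apply: (getSolution_supported g1); apply: child_neq0.
Qed.

Lemma getSolution_rooted {s u S} : getSolution s u S -> rooted_solution u S.
Proof.
elim=> {u S} [u _|u a S0 S1 _ /andP[ea _] _ g0 IH0 g1 IH1].
  exact: rooted_solution_leaf.
have [aP0 aP1 a01] := getSolution_children_apart ea g0 g1.
exact: rooted_solution_node.
Qed.

Lemma child_expanded_of_valA_lt {s a} k {t : R} : invariant s ->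
  ((acost a)%:E + valA (UB s) a < t%:E)%E -> child a k \in Ex s.
Proof.
move=> hs; apply: contraTT => /(inv_unexpanded hs) ckE; rewrite -leNgt.
suff -> : valA (UB s) a = +oo%E by rewrite addey // leey.
by rewrite /valA; case: k ckE => ->; rewrite ?addey ?addye ?UB_neqNy.
Qed.

Lemma getSolution_cost {s u S} : invariant s -> getSolution s u S -> u \in Ex s ->
  S \subset Gp s /\ (solcost S)%:E = UB s u.
Proof.
move=> hs; elim=> {u S} [u le_t|u a S0 S1 lt_t /andP[ea aG] eq_min g0 IH0 g1 IH1] uE.
  have [tG uG] := expanded_mem (inv_graph hs) uE.
  have eT : edge (OrN u) (TermN u) by rewrite /= eqxx.
  split; first by apply/subsetP => v; rewrite !inE => /orP[]/eqP->.
  by rewrite solcost_pair // UB_bellman // minval_minUB min_l.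
have lt_a : ((acost a)%:E + valA (UB s) a < (tcost u)%:E)%E by rewrite eq_min.
have [sub0 cost0] := IH0 (child_expanded_of_valA_lt false hs lt_a).
have [sub1 cost1] := IH1 (child_expanded_of_valA_lt true hs lt_a).
have [aP0 aP1 a01] := getSolution_children_apart ea g0 g1.
split.
  have [_ uG] := expanded_mem (inv_graph hs) uE.
  apply/subsetP => v; rewrite !inE -!orbA.
  by case/or4P=> [/eqP->|/eqP->|/(subsetP sub0)|/(subsetP sub1)].
rewrite solcost_apart; last exact: apart_sym (apart_setUr (apart_sym aP1) (apart_sym a01)).
rewrite solcost_apart // solcost_pair // !EFinD cost0 cost1 -addeA.
by rewrite (UB_bellman hs uE) minval_minUB min_r ?(ltW lt_t) // -eq_min.
Qed.

Section LowerBound.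
Context {s : state} (hs : invariant s) {S : {set node}}
  (hS : is_solution S) (hSG : S \subset Gp s).

Lemma solution_parent {v} : v \in S -> v != OrN root -> exists2 z, z \in S & edge z v.
Proof.
case: hS => _ _ conn _ _ vS nr; case/connectP: (conn v vS) => p.
case/lastP: p => [_ vr|p y]; first by rewrite vr eqxx in nr.
rewrite rcons_path last_rcons => /andP[_ /and3P[e zS _]] vy.
by exists (last (OrN root) p); rewrite // vy.
Qed.

Lemma solution_OrN_child {o} :
  OrN o \in S -> exists c, [set v in S | edge (OrN o) v] = [set c].
Proof. by case: hS => _ _ _ _ or_one oS; apply/cards1P; rewrite or_one. Qed.

Lemma solution_OrN_child_uniq {o w1 w2} : OrN o \in S -> w1 \in S -> w2 \in S ->
  edge (OrN o) w1 -> edge (OrN o) w2 -> w1 = w2.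
Proof.
move=> oS w1S w2S e1 e2; have [c oc] := solution_OrN_child oS.
have : w1 \in [set v in S | edge (OrN o) v] by rewrite inE w1S.
have : w2 \in [set v in S | edge (OrN o) v] by rewrite inE w2S.
by rewrite oc !inE => /eqP-> /eqP->.
Qed.

Lemma solution_OrN_expanded {o} : OrN o \in S -> o \in Ex s.
Proof.
move=> oS; have [c oc] := solution_OrN_child oS.
have : c \in [set v in S | edge (OrN o) v] by rewrite oc inE.
rewrite inE => /andP[/(subsetP hSG) cG /edge_from_OrN[ct|[a ca ea]]].
  rewrite ct in cG; exact: (term_mem (inv_graph hs) cG).
rewrite ca in cG; have [<- _ _] := edge_OrN_AndN ea.
by have [] := and_mem (inv_graph hs) cG.
Qed.

Lemma solution_AndN {a} : AndN a \in S -> OrN a.1 \in S /\ edge (OrN a.1) (AndN a).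
Proof.
move=> aS; have [_ ea _ _] := and_mem (inv_graph hs) (subsetP hSG _ aS).
by have [z zS /edge_into_AndN za] := solution_parent aS isT; split; rewrite // -za.
Qed.

Lemma solution_AndN_inj {a a'} : AndN a \in S -> AndN a' \in S -> a.1 = a'.1 -> a = a'.
Proof.
move=> aS a'S e; have [pS ea] := solution_AndN aS; have [_ ea'] := solution_AndN a'S.
by rewrite -e in ea'; case: (solution_OrN_child_uniq pS aS a'S ea ea').
Qed.

Lemma solution_OrN_parent {o} : OrN o \in S -> o != root ->
  exists a k, [/\ AndN a \in S, o = child a k & o.2 = a.1.2.+1 :> nat].
Proof.
move=> oS nr; have [|z zS /edge_into_OrN[a za [k ok]]] := solution_parent oS.
  by apply: contra nr => /eqP[->]; rewrite eqxx.
rewrite za in zS; have [_ /edge_OrN_AndN[_ lt _]] := solution_AndN zS.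
by exists a, k; rewrite ok child_depth.
Qed.

Lemma solution_depth_disjoint n {o o'} : OrN o \in S -> OrN o' \in S ->
  o.2 = n :> nat -> o'.2 = n :> nat -> o != o' -> [disjoint o.1 & o'.1].
Proof.
elim: n o o' => [|n IH] o o' oS o'S ho ho' oo'.
  have at_root x : OrN x \in S -> x.2 = 0%N :> nat -> x = root.
    move=> xS x0; apply/eqP; apply: contraT => nr.
    by have [a [k [_ _ xa]]] := solution_OrN_parent xS nr; rewrite x0 in xa.
  by move: oo'; rewrite (at_root o oS ho) (at_root o' o'S ho') eqxx.
have nr (x : onode) : x.2 = n.+1 :> nat -> x != root.
  by move=> x1; apply/eqP => xr; move: x1; rewrite xr.
have [a [k [aS eo da]]] := solution_OrN_parent oS (nr o ho).
have [a' [k' [a'S eo' da']]] := solution_OrN_parent o'S (nr o' ho').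
subst o o'.
case: (eqVneq a.1 a'.1) => [/(solution_AndN_inj aS a'S) aa'|ne].
  subst a'; case: k k' oo' {oS o'S da da' ho ho'} => [] [] kk'.
  - by rewrite eqxx in kk'.
  - by rewrite disjoint_sym child_disjoint.
  - exact: child_disjoint.
  - by rewrite eqxx in kk'.
have [pS _] := solution_AndN aS; have [p'S _] := solution_AndN a'S.
have d : [disjoint a.1.1 & a'.1.1].
  by apply: IH pS p'S _ _ ne; apply: succn_inj; rewrite -?da -?da' ?ho ?ho'.
exact: disjointWl (child_subset a k) (disjointWr (child_subset a' k') d).
Qed.

Lemma solution_AndN_parent_uniq {a a' k k'} : AndN a \in S -> AndN a' \in S ->
  child a k = child a' k' -> a = a'.
Proof.
move=> aS a'S e.
have [pS /edge_OrN_AndN[_ lt aV]] := solution_AndN aS.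
have [p'S /edge_OrN_AndN[_ lt' _]] := solution_AndN a'S.
case: (eqVneq a.1 a'.1) => [|ne]; first exact: solution_AndN_inj.
have d : [disjoint a.1.1 & a'.1.1].
  apply: (solution_depth_disjoint _ pS p'S erefl _ ne).
  by apply: succn_inj; rewrite -(child_depth k lt) -(child_depth k' lt') e.
case/negP: (child_neq0 k aV); rewrite -subset0.
move: d; rewrite -setI_eq0 => /eqP <-.
by rewrite subsetI child_subset e child_subset.
Qed.

Lemma solution_parents_card {w} : w \in S ->
  #|[set v in S | edge v w]| = (w != OrN root) :> nat.
Proof.
move=> wS; case: (eqVneq w (OrN root)) => [->|nr] /=.
  apply/eqP; rewrite cards_eq0; apply/eqP/setP => v; rewrite !inE.
  apply/negbTE/andP => -[vS /edge_into_OrN[a va [k rk]]]; rewrite va in vS.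
  have [_ /edge_OrN_AndN[_ lt _]] := solution_AndN vS.
  by have := child_depth k lt; rewrite -rk.
have [z zS ez] := solution_parent wS nr.
apply/eqP/cards1P; exists z; apply/setP => v; rewrite !inE.
apply/andP/eqP => [[vS ev]|->] //; case: w {wS nr} ez ev => [o|o|a].
- move=> /edge_into_OrN[b zb [k ok]] /edge_into_OrN[b' vb [k' ok']].
  rewrite zb in zS; rewrite vb in vS.
  by rewrite vb zb (solution_AndN_parent_uniq vS zS (etrans (esym ok') ok)).
- by move=> /edge_into_TermN-> /edge_into_TermN->.
- by move=> /edge_into_AndN-> /edge_into_AndN->.
Qed.

Definition potential (v : node) : R :=
  match v with
  | OrN o => fine (UB s o)
  | TermN _ => 0
  | AndN a => fine (UB s (child a false)) + fine (UB s (child a true))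
  end.

Lemma solution_children {a} k : AndN a \in S -> OrN (child a k) \in S.
Proof. by case: hS => _ _ _ and_cl _ aS; apply: and_cl aS (edge_child a k). Qed.

Lemma potential_OrN_le {o c} : OrN o \in S -> c \in S -> edge (OrN o) c ->
  potential (OrN o) <= ecost (OrN o) c + potential c.
Proof.
move=> oS cS e; have oE := solution_OrN_expanded oS.
rewrite -lee_fin EFinD /= (fine_UB_expanded hs oE) (UB_bellman hs oE).
case: c cS e => [o'|o'|a] cS e //=.
  by rewrite adde0 minval_le_tcost.
rewrite EFinD !(fine_UB_expanded hs (solution_OrN_expanded (solution_children _ cS))).
by apply: minval_le_kid; rewrite /kidA e (subsetP hSG).
Qed.

Lemma potential_AndN {a} : AndN a \in S ->
  \sum_(w in S | edge (AndN a) w) potential w = potential (AndN a).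
Proof.
move=> aS; have [_ /edge_OrN_AndN[_ _ aV]] := solution_AndN aS.
rewrite (eq_bigl (mem [set OrN (child a false); OrN (child a true)])) => [|w].
  by rewrite big_setU1 ?big_set1 // in_set1 (inj_eq OrN_inj) children_neq.
rewrite !inE; apply/andP/idP => [[_ /edge_from_AndN[[] ->]]|]; rewrite ?eqxx ?orbT //.
by case/orP=> /eqP->; rewrite solution_children ?edge_child.
Qed.

Lemma potential_local {v} : v \in S ->
  potential v - \sum_(w in S | edge v w) potential w <= \sum_(w in S | edge v w) ecost v w.
Proof.
case: v => [o|o|a] vS.
- have [c oc] := solution_OrN_child vS.
  have : c \in [set v in S | edge (OrN o) v] by rewrite oc inE.
  rewrite inE => /andP[cS e].
  by rewrite !(sum_filter_set1 _ oc) lerBlDr potential_OrN_le.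
- by rewrite !big1 ?subr0 // => w /andP[].
- by rewrite potential_AndN // subrr big1 // => w _; case: w.
Qed.

Lemma sum_potential_children :
  \sum_(v in S) \sum_(w in S | edge v w) potential w =
  \sum_(w in S) potential w - potential (OrN root).
Proof.
have rS : OrN root \in S by case: hS.
rewrite (eq_bigr (fun v => \sum_(w in S) (if edge v w then potential w else 0))); last first.
  by move=> v _; rewrite big_mkcondr.
rewrite exchange_big /=.
rewrite (eq_bigr (fun w => potential w *+ (w != OrN root))) => [|w wS]; last first.
  rewrite -(solution_parents_card wS) -sumr_const -big_mkcondr.
  by apply: eq_bigl => v; rewrite inE.
rewrite [in RHS](bigD1 (OrN root)) //= (bigD1 (OrN root)) //= eqxx mulr0n add0r.
by rewrite addrAC subrr add0r; apply: eq_bigr => w /andP[_ ->].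
Qed.

Lemma UB_root_le_solcost : (UB s root <= (solcost S)%:E)%E.
Proof.
have rS : OrN root \in S by case: hS.
rewrite -(fine_UB_expanded hs (solution_OrN_expanded rS)) lee_fin.
have : \sum_(v in S) (potential v - \sum_(w in S | edge v w) potential w) <= solcost S.
  by apply: ler_sum => v vS; apply: potential_local.
by rewrite sumrB sum_potential_children opprB addrC subrK.
Qed.

End LowerBound.

Lemma run_invariant {k} {run : nat -> state} :
  run 0%N = @init_state R N F Y rho1 rho0 alpha beta ->
  (forall i, (i < k)%N -> iteration (run i) (run i.+1)) ->
  forall i, (i <= k)%N -> invariant (run i) /\ ((0 < i)%N -> root \in Ex (run i)).
Proof.
move=> run0 step; elim=> [|i IH] le_ik.
  by rewrite run0; split=> //; apply: invariant_init.
have [hs _] := IH (ltnW le_ik).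
by have [] := invariant_iteration hs (step i le_ik).
Qed.

End MAPTreeCorrectness.

Theorem theorem12 (R : realType) (N F : nat) (X : 'I_N -> 'I_F -> bool) (Y : 'I_N -> bool)
    (rho1 rho0 alpha beta : R)
    (hrho1 : 0 < rho1) (hrho0 : 0 < rho0) (halpha : 0 < alpha < 1) (hbeta : 0 <= beta)
    (k : nat) (run : nat -> @state R N F) :
  run 0%N = @init_state R N F Y rho1 rho0 alpha beta ->
  (forall i, (i < k)%N ->
     guard (run i) /\ iteration X Y rho1 rho0 alpha beta (run i) (run i.+1)) ->
  (0 < k)%N ->
  guard (run k) ->
  forall S, getSolution X Y rho1 rho0 alpha beta (run k) (mroot N F) S ->
    [/\ is_solution X S, S \subset Gp (run k) &
        forall S', is_solution X S' -> S' \subset Gp (run k) ->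
          solcost X Y rho1 rho0 alpha beta S <= solcost X Y rho1 rho0 alpha beta S'].
Proof.
move=> run0 steps k_gt0 _ S hS.
have iterations i (lt_ik : (i < k)%N) := (steps i lt_ik).2.
have [hs root_expanded] := run_invariant run0 iterations k (leqnn k).
have [S_sub costS] := getSolution_cost hs hS (root_expanded k_gt0).
split=> // [|S' hS' hS'_sub].
  exact/rooted_solution_is_solution/(getSolution_rooted hS).
by rewrite -lee_fin costS (UB_root_le_solcost hs hS' hS'_sub).
Qed.
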